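(* Let $r$ be a rational number with $0<r<1$, written $r=[m_1,\dots,m_k]$, and let $n\ge2$ be an integer. Put $m=m_1$. Define intervals: if $k$ is odd, $I_1(r;n)=[0,r_1)$ with $r_1=[m_1,\dots,m_k,2n-2]$ and $I_2(r;n)=[r_2,1]$ with $r_2=[m_1,\dots,m_{k-1},m_k-1,2]$; if $k$ is even, $I_1(r;n)=[0,r_1]$ with $r_1=[m_1,\dots,m_{k-1},m_k-1,2]$ and $I_2(r;n)=(r_2,1]$ with $r_2=[m_1,\dots,m_k,2n-2]$. Then for every rational $s\neq0$ with $s\in I_1(r;n)\cup I_2(r;n)$: (1) if $k=1$ (i.e. $r=1/m$), then $CS(s)$ does not contain $((2n-2)\langle m\rangle)$ as a subsequence; (2) if $k\ge2$, then $CS(s)$ contains neither $((2n-1)\langle S_1,S_2\rangle)$ nor $((2n-1)\langle S_2,S_1\rangle)$ as a subsequence, where $(S_1,S_2)$ is the pair associated with $r$.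
   Context: Continued fractions: $[m_1,m_2,\dots,m_k]=1/(m_1+1/(m_2+\cdots+1/m_k))$ with $k\ge1$, $m_i$ positive integers, and $m_k\ge2$ unless $k=1$; every rational in $(0,1]$ has a unique such expansion. Words $u_r$: for $r=q/p$ with $0<r\le1$, $p,q$ coprime positive integers, put $\epsilon_i=(-1)^{\lfloor iq/p\rfloor}$; if $p$ is odd, $u_r=a\hat u_r b^{(-1)^q}\hat u_r^{-1}$ with $\hat u_r=b^{\epsilon_1}a^{\epsilon_2}\cdots b^{\epsilon_{p-2}}a^{\epsilon_{p-1}}$; if $p$ is even, $u_r=a\hat u_r a^{-1}\hat u_r^{-1}$ with $\hat u_r=b^{\epsilon_1}a^{\epsilon_2}\cdots a^{\epsilon_{p-2}}b^{\epsilon_{p-1}}$ (a cyclically reduced word in the free group $F(a,b)$). $S$-sequences: for a reduced word $v$ in $\{a,b\}$, write $v\equiv v_1\cdots v_t$ (visual equality) where each $v_i$ is a maximal block whose letters all have exponent $+1$ or all have exponent $-1$, consecutive blocks having opposite signs; $S(v)=(|v_1|,\dots,|v_t|)$. For a cyclic word $(v)$ (set of cyclic permutations of a cyclically reduced $v$), the cyclic $S$-sequence $CS(v)$ is the analogous cyclic sequence of block lengths taken cyclically. $S(r):=S(u_r)$, $CS(r):=CS(u_r)$. Notation: $j\langle x\rangle$ denotes $j$ consecutive copies of $x$; $j\langle X,Y\rangle$ denotes $(X,Y,X,Y,\dots,X,Y)$ with $j$ copies of $(X,Y)$. A sequence $(a_1,\dots,a_p)$ is a subsequence of a cyclic sequence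 if some representative $(b_1,\dots,b_t)$ of the cyclic sequence has $p\le t$ and $a_i=b_i$ for $1\le i\le p$ (consecutive terms). The pair $(S_1,S_2)$ associated with $r=[m_1,\dots,m_k]\in(0,1]$, $m=m_1$, is defined recursively: if $k=1$, $S_1=\emptyset$, $S_2=(m)$. If $k\ge2$, let $\tilde r=[m_3,\dots,m_k]$ if $m_2=1$ and $\tilde r=[m_2-1,m_3,\dots,m_k]$ if $m_2\ge2$, and let $(T_1,T_2)$ be the pair associated with $\tilde r$. If $m_2=1,k=3$: $S_1=(m_3\langle m+1\rangle)$, $S_2=(m)$. If $m_2=1,k\ge4$: writing $T_1=(t_1,\dots,t_{s_1})$, $T_2=(t_{s_1+1},\dots,t_{s_2})$, $S_1=(t_1\langle m+1\rangle,m,t_2\langle m+1\rangle,\dots,m,t_{s_1}\langle m+1\rangle)$ and $S_2=(m,t_{s_1+1}\langle m+1\rangle,m,\dots,m,t_{s_2}\langle m+1\rangle,m)$. If $m_2\ge2,k=2$: $S_1=(m+1)$, $S_2=((m_2-1)\langle m\rangle)$. If $m_2\ge2,k\ge3$: with the same notation $S_1=(m+1,t_{s_1+1}\langle m\rangle,m+1,\dots,m+1,t_{s_2}\langle m\rangle,m+1)$, $S_2=(t_1\langle m\rangle,m+1,t_2\langle m\rangle,\dots,m+1,t_{s_1}\langle m\rangle)$. It is known that $S(r)=(S_1,S_2,S_1,S_2)$. *)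

From HB Require Import structures.
From mathcomp Require Import all_boot all_order all_algebra.
Set Implicit Arguments. Unset Strict Implicit. Unset Printing Implicit Defensive.
Import Order.TTheory GRing.Theory Num.Theory.

Fixpoint cf (ms : seq nat) : rat :=
  match ms with
  | [::] => 0%R
  | m :: rest => ((m%:R + cf rest)^-1)%R
  end.

Definition cf_valid (ms : seq nat) : bool :=
  [&& 0 < size ms, all (fun m => 0 < m) ms & (1 < size ms) ==> (2 <= last 0 ms)].

Inductive gen := Ga | Gb.
(* a letter is a generator together with its exponent sign (true = +1) *)
Definition word := seq (gen * bool).

Definition winv (w : word) : word := rev [seq (x.1, ~~ x.2) | x <- w].

(* epsilon_i = (-1)^floor(i q / p) ; true means +1 *)
Definition eps (q p i : nat) : bool := ~~ odd (i * q %/ p).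

Definition uhat (q p : nat) : word :=
  [seq ((if odd i then Gb else Ga), eps q p i) | i <- iota 1 p.-1].

Definition u_word (q p : nat) : word :=
  if odd p then (Ga, true) :: uhat q p ++ (Gb, ~~ odd q) :: winv (uhat q p)
  else (Ga, true) :: uhat q p ++ (Ga, false) :: winv (uhat q p).

Fixpoint runs_aux (b : bool) (n : nat) (s : seq bool) : seq nat :=
  match s with
  | [::] => [:: n]
  | c :: s' => if c == b then runs_aux b n.+1 s' else n :: runs_aux c 1 s'
  end.

Definition runs (s : seq bool) : seq nat :=
  match s with [::] => [::] | b :: s' => runs_aux b 1 s' end.

Definition Sseq (v : word) : seq nat := runs (map snd v).

(* a representative of the cyclic S-sequence: rotate the word so that it
   starts at a (cyclic) block boundary, then take block lengths *)
Definition CSseq (v : word) : seq nat :=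
  let s := map snd v in
  let bd i := nth false s i != nth false s ((i + size s).-1 %% size s) in
  runs (rot (find bd (iota 0 (size s))) s).

Definition cyc_subseq (a cs : seq nat) : Prop :=
  exists j, prefix a (rot j cs).

Definition u_rat (r : rat) : word := u_word `|numq r|%N `|denq r|%N.
Definition S_rat (r : rat) : seq nat := Sseq (u_rat r).
Definition CS_rat (r : rat) : seq nat := CSseq (u_rat r).

(* fuel-driven recursion; fuel (sumn ms).+1 is always sufficient since
   the sum of the entries strictly decreases at each recursive call *)
Fixpoint pairF (fuel : nat) (ms : seq nat) : seq nat * seq nat :=
  match fuel with
  | 0 => ([::], [::])
  | f.+1 =>
    match ms with
    | [::] => ([::], [::])
    | [:: m] => ([::], [:: m])
    | m :: m2 :: rest =>
      if m2 == 1 then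
        match rest with
        | [::] => ([::], [::]) (* not a valid expansion *)
        | [:: m3] => (nseq m3 m.+1, [:: m])
        | _ =>
          let T := pairF f rest in
          (nseq (head 0 T.1) m.+1 ++
             flatten [seq m :: nseq t m.+1 | t <- behead T.1],
           flatten [seq m :: nseq t m.+1 | t <- T.2] ++ [:: m])
        end
      else
        match rest with
        | [::] => ([:: m.+1], nseq m2.-1 m)
        | _ =>
          let T := pairF f (m2.-1 :: rest) in
          (flatten [seq m.+1 :: nseq t m | t <- T.2] ++ [:: m.+1],
           nseq (head 0 T.1) m ++
             flatten [seq m.+1 :: nseq t m | t <- behead T.1])
        end
    end
  end.

Definition assoc_pair (ms : seq nat) : seq nat * seq nat :=
  pairF (sumn ms).+1 ms.

Definition ra (ms : seq nat) (n : nat) : rat := cf (ms ++ [:: (2 * n - 2)%N]).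
Definition rb (ms : seq nat) : rat :=
  cf (take (size ms).-1 ms ++ [:: (last 0 ms).-1; 2%N]).

Definition in_I12 (ms : seq nat) (n : nat) (s : rat) : bool :=
  if odd (size ms) then
    ((0 <= s) && (s < ra ms n))%R || ((rb ms <= s) && (s <= 1))%R
  else
    ((0 <= s) && (s <= rb ms))%R || ((ra ms n < s) && (s <= 1))%R.

Definition rep2 (j : nat) (X Y : seq nat) : seq nat := flatten (nseq j (X ++ Y)).

(* Idea.  For s = a/b in lowest terms, CS(s) is the cyclic sequence of level counts
   #{i < 2b | floor(i a / b) = k}, k < 2a, whose partial sums are ceil(e b / a).  Hence
   CS(s) is balanced: a block of L consecutive terms with sum W satisfies |L - W s| < s.
   Write q/p = r and q'/p' = [m_1,...,m_{k-1}] (the convergents, with |q p' - q' p| = 1).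
   The pair (S_1,S_2) has total length q and total sum p, and one of its members has
   length q' and sum p' -/+ 1 according to the parity of k.  A subsequence
   (c+1)<S_1,S_2> contains the blocks (S_1,S_2)^c S_1 and (S_2,S_1)^c S_2, and their
   balance places s strictly between the endpoints r_a = (c q + q')/(c p + p') and
   r_b = (2q - q')/(2p - p') of the intervals, i.e. outside I_1 ∪ I_2; for k = 1 the
   block c<m_1> does the same.  The last step is the mediant inequality comparing
   ((c+1) q - q')/((c+1) p - p') with r_b. *)

From HB Require Import structures.
From mathcomp Require Import all_boot all_order all_algebra.
From mathcomp Require Import zify ring lra.
Set Implicit Arguments. Unset Strict Implicit. Unset Printing Implicit Defensive.
Import Order.TTheory GRing.Theory Num.Theory.

(* Runs of the parity pattern of a function that grows by steps of 0 or 1: the run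
   attached to the value k has length #{i | f i = k}. *)
Section ParityRuns.

Variable f : nat -> nat.
Hypothesis f_step : forall i, f i.+1 = f i \/ f i.+1 = (f i).+1.

Lemma step_mono i j : i <= j -> f i <= f j.
Proof.
move/subnK <-; elim: (j - i) => [|k IH]; first by rewrite add0n.
by rewrite addSn; case: (f_step (k + i)) => ->; lia.
Qed.

(* Generalized form, with n points of the first run already read, for induction. *)
Lemma runs_aux_parity len a n :
  runs_aux (~~ odd (f a)) n [seq ~~ odd (f i) | i <- iota a.+1 len] =
  [seq (if k == f a then n else 0) + count (fun i => f i == k) (iota a.+1 len)
     | k <- iota (f a) (f (a + len) - f a).+1].
Proof.
elim: len a n => [|len IH] a n; first by rewrite addn0 subnn /= eqxx addn0.
rewrite [iota a.+1 _]/= [map _ (_ :: _)]/= [runs_aux _ _ (_ :: _)]/=.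
case: (f_step a) => Ha.
- have -> : ~~ odd (f a.+1) == ~~ odd (f a) by rewrite Ha.
  have -> : ~~ odd (f a) = ~~ odd (f a.+1) by rewrite Ha.
  rewrite IH -addSnnS Ha; apply: eq_map => k /=.
  rewrite Ha; case: eqP => [->|/eqP Hk]; first by rewrite eqxx /= addSn addnS.
  by rewrite eq_sym (negbTE Hk).
- have -> : (~~ odd (f a.+1) == ~~ odd (f a)) = false by rewrite Ha /=; case: (odd (f a)).
  rewrite IH -addSnnS.
  have Hle : f a.+1 <= f (a.+1 + len) by apply: step_mono; lia.
  have -> : (f (a.+1 + len) - f a).+1 = (f (a.+1 + len) - f a.+1).+2 by lia.
  rewrite [in RHS]Ha [iota _ _.+2]/= -Ha /=; congr (_ :: _).
  + rewrite eqxx Ha (_ : ((f a).+1 == f a) = false) ?add0n; last by lia.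
    suff -> : count (fun i => f i == f a) (iota a.+2 len) = 0 by rewrite addn0.
    apply/eqP; rewrite -leqn0 leqNgt -has_count; apply/hasPn => i.
    rewrite mem_iota => /andP [H1 _].
    by have := @step_mono a.+1 i (ltnW H1); rewrite Ha; lia.
  + rewrite Ha eqxx (_ : ((f a).+1 == f a) = false) /=; last by lia.
    congr (_ :: _); apply/eq_in_map => k; rewrite mem_iota => /andP [Hk _].
    by rewrite (_ : k == (f a).+1 = false) 1?(_ : k == f a = false)
               1?(_ : (f a).+1 == k = false) //; lia.
Qed.

End ParityRuns.

Lemma odd_floor_reflect q p j : coprime q p -> 0 < j < p ->
  odd ((p - j) * q %/ p) = ~~ odd ((p + j) * q %/ p).
Proof.
move=> cop /andP [j0 jp]; have p0 : 0 < p by lia.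
have Ej : (p + j) * q = q * p + j * q by rewrite mulnDl mulnC.
rewrite Ej divnMDl // oddD.
have Esum : (p - j) * q + j * q = q * p by rewrite -mulnDl subnK ?(ltnW jp) // mulnC.
have ndvd : ~~ (p %| j * q).
  by rewrite Gauss_dvdl 1?coprime_sym //; apply/negP => /dvdn_leq; lia.
have carry : p <= (p - j) * q %% p + (j * q) %% p.
  have rem_pos : 0 < (j * q) %% p by rewrite lt0n.
  apply: dvdn_leq; first by rewrite addn_gt0 rem_pos orbT.
  by rewrite /dvdn modnDm Esum modnMl.
have Hq : q = (p - j) * q %/ p + j * q %/ p + 1.
  by have := divnD ((p - j) * q) (j * q) p0; rewrite Esum mulnK // carry.
by rewrite {2}Hq !oddD; case: (odd _); case: (odd _).
Qed.

Lemma signs_u_word q p : coprime q p -> 0 < q <= p ->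
  map snd (u_word q p) = [seq ~~ odd (i * q %/ p) | i <- iota 0 (2 * p)].
Proof.
move=> cop /andP [q0 qp]; have p0 : 0 < p by lia.
set g := fun i => ~~ odd (i * q %/ p).
have Ehat : map snd (uhat q p) = map g (iota 1 p.-1) by rewrite /uhat -map_comp.
have Einv w : map snd (winv w) = rev (map negb (map snd w)).
  by rewrite /winv map_rev -!map_comp.
have Erefl : rev (map negb (map g (iota 1 p.-1))) = map g (iota p.+1 p.-1).
  apply: (eq_from_nth (x0 := false)); first by rewrite size_rev !size_map !size_iota.
  rewrite size_rev !size_map size_iota => i ip.
  rewrite nth_rev ?size_map ?size_iota // !(nth_map 0) ?size_iota; try lia.
  rewrite (nth_map false) ?size_map ?size_iota; last by lia.
  rewrite (nth_map 0) ?size_iota; last by lia.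
  rewrite !nth_iota; try lia.
  rewrite /g negbK (_ : 1 + (p.-1 - i.+1) = p - i.+1) 1?(_ : p.+1 + i = p + i.+1); try lia.
  by rewrite odd_floor_reflect //; lia.
have Eiota : iota 0 (2 * p) = 0 :: iota 1 p.-1 ++ p :: iota p.+1 p.-1.
  have Ep : p = p.-1.+1 by lia.
  by rewrite mul2n -addnn iotaD add0n {1 3}Ep.
have g0 : g 0 = true by rewrite /g mul0n div0n.
have gp : g p = ~~ odd q by rewrite /g mulnC mulnK.
have oddq : ~~ odd p -> odd q by move=> ep; rewrite -coprimen2 (coprime_dvdr _ cop) // dvdn2.
rewrite Eiota /u_word; case: ifP => Hp;
  rewrite /= map_cat /= Ehat Einv Ehat Erefl !map_cat /= g0 gp //.
by rewrite oddq ?Hp.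
Qed.

(* When the first and last exponents of v differ, v already starts at a block
   boundary, so the representative CS(v) is just S(v). *)
Lemma CSseq_boundary (v : word) : 0 < size v ->
  nth false (map snd v) 0 != nth false (map snd v) (size v).-1 -> CSseq v = Sseq v.
Proof.
move=> v0 hl; rewrite /CSseq /Sseq; set s := map snd v.
have Es : size s = (size v).-1.+1 by rewrite size_map; lia.
suff -> : find (fun i => nth false s i != nth false s ((i + size s).-1 %% size s))
            (iota 0 (size s)) = 0 by rewrite rot0.
by rewrite Es /= modn_small // (negbTE hl).
Qed.

Lemma floor_step q p i : 0 < q <= p ->
  i.+1 * q %/ p = i * q %/ p \/ i.+1 * q %/ p = (i * q %/ p).+1.
Proof. by move=> qp; nia. Qed.

Definition level_counts (q p : nat) : seq nat :=
  [seq count (fun i => i * q %/ p == k) (iota 0 (2 * p)) | k <- iota 0 (2 * q)].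

Lemma CS_u_word q p : coprime q p -> 0 < q <= p -> CSseq (u_word q p) = level_counts q p.
Proof.
move=> cop qp; have p0 : 0 < p by lia.
have Esigns := signs_u_word cop qp.
have sz : size (u_word q p) = 2 * p by rewrite -(size_map snd) Esigns size_map size_iota.
have ends : nth false (map snd (u_word q p)) 0 !=
             nth false (map snd (u_word q p)) (size (u_word q p)).-1.
  rewrite sz Esigns !(nth_map 0) ?size_iota ?nth_iota; try lia.
  rewrite mul0n div0n (_ : (2 * p).-1 * q %/ p = (2 * q).-1) /=; last by nia.
  by rewrite (_ : (2 * q).-1 = (q.-1).*2.+1) /= ?odd_double //; lia.
rewrite CSseq_boundary //; last by rewrite sz; lia.
rewrite /level_counts /Sseq Esigns (_ : 2 * p = (2 * p).-1.+1) /=; last by lia.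
have := runs_aux_parity (fun i => floor_step i qp) (2 * p).-1 0 1.
rewrite /= mul0n div0n subn0 (_ : (2 * p).-1 * q %/ p = (2 * q).-1); last by nia.
move=> ->; rewrite [2 * q](_ : _ = (2 * q).-1.+1) /=; last by lia.
by congr (_ :: _); apply: eq_map => k; rewrite eq_sym; case: (k == 0).
Qed.

Lemma sumn_level_counts (f : nat -> nat) (s : seq nat) e :
  sumn [seq count (fun i => f i == k) s | k <- iota 0 e] = count (fun i => f i < e) s.
Proof.
elim: e => [|e IH]; first by elim: s => //= x s <-.
rewrite -addn1 iotaD map_cat sumn_cat IH /= addn0 add0n addn1.
by elim: s {IH} => //= x s IHs; rewrite ltnS; case: ltngtP => _ /=; lia.
Qed.

Lemma count_lt_iota t M : count (fun i => i < t) (iota 0 M) = minn t M.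
Proof.
elim: M => [|M IH]; first by rewrite minn0.
by rewrite -addn1 iotaD count_cat IH /= add0n addn0; lia.
Qed.

Definition ceil_frac (q p e : nat) : nat := (e * p + q.-1) %/ q.

Lemma ceil_frac_bounds q p e : 0 < q -> e * p <= q * ceil_frac q p e < e * p + q.
Proof. by move=> q0; rewrite /ceil_frac; apply/andP; split; nia. Qed.

Lemma ceil_frac_period q p t : 0 < q ->
  ceil_frac q p (t + 2 * q) = ceil_frac q p t + ceil_frac q p (2 * q).
Proof.
move=> q0; rewrite /ceil_frac.
rewrite (_ : (t + 2 * q) * p + q.-1 = 2 * p * q + (t * p + q.-1)); last by nia.
rewrite (_ : 2 * q * p + q.-1 = 2 * p * q + q.-1); last by nia.
by rewrite !divnMDl // (divn_small (m := q.-1)) ?addn0; lia.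
Qed.

Lemma level_counts_prefix_sum q p e : 0 < q <= p -> e <= 2 * q ->
  sumn (take e (level_counts q p)) = ceil_frac q p e.
Proof.
move=> qp eq; rewrite -map_take take_iota (_ : minn e (2 * q) = e); last by lia.
rewrite sumn_level_counts (eq_count (a2 := fun i => i < ceil_frac q p e)).
  by rewrite count_lt_iota /ceil_frac; nia.
by move=> i /=; rewrite /ceil_frac; apply/idP/idP; nia.
Qed.

Lemma rot_prefix_sums (cs : seq nat) (H : nat -> nat) :
  (forall e, e <= size cs -> sumn (take e cs) = H e) ->
  (forall t, t <= size cs -> H (t + size cs) = H t + H (size cs)) ->
  forall j, exists j0, forall e, e <= size cs ->
    sumn (take e (rot j cs)) + H j0 = H (j0 + e).
Proof.
move=> Hsum Hper j; set K := size cs.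
have H0 : H 0 = 0 by rewrite -Hsum // take0.
have HK : sumn cs = H K by rewrite -Hsum // take_size.
have [jK|Kj] := ltnP j K; last first.
  by exists 0 => e eK; rewrite rot_oversize // Hsum // H0 addn0.
exists j => e eK; rewrite /rot take_cat size_drop -/K.
case: ltnP => ejK.
  by have := takeD j e cs; move/(congr1 sumn); rewrite sumn_cat !Hsum; lia.
rewrite sumn_cat take_takel; last by lia.
have Hdrop : sumn (drop j cs) + H j = H K.
  by have := cat_take_drop j cs; move/(congr1 sumn); rewrite sumn_cat HK Hsum; lia.
have := Hper (e - (K - j)) ltac:(lia).
by rewrite (_ : e - (K - j) + K = j + e) ?Hsum -/K; lia.
Qed.

Lemma level_counts_window q p (A B : seq nat) j : 0 < q <= p ->
  prefix (A ++ B) (rot j (level_counts q p)) ->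
  q * sumn B < size B * p + q /\ size B * p < q * sumn B + q.
Proof.
move=> qp HP; have q0 : 0 < q by lia.
have sz : size (level_counts q p) = 2 * q by rewrite size_map size_iota.
have [j0 Hj0] := @rot_prefix_sums (level_counts q p) (ceil_frac q p)
  (fun e eK => @level_counts_prefix_sum q p e qp ltac:(by rewrite -sz))
  (fun t _ => ltac:(rewrite sz; exact: ceil_frac_period)) j.
rewrite sz in Hj0.
have ABK : size A + size B <= 2 * q.
  by have := size_prefix HP; rewrite size_rot sz size_cat.
move/prefixP: HP => [rest Erest].
have EA := Hj0 (size A) ltac:(lia); have EAB := Hj0 (size A + size B) ABK.
rewrite Erest -catA take_size_cat // in EA.
rewrite Erest -size_cat take_size_cat // sumn_cat size_cat in EAB.
have EB : q * sumn B + q * ceil_frac q p (j0 + size A) =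
          q * ceil_frac q p (j0 + (size A + size B)).
  by rewrite -mulnDr; congr (_ * _); lia.
have := ceil_frac_bounds p (j0 + size A) q0.
have := ceil_frac_bounds p (j0 + (size A + size B)) q0.
by move=> /andP [? ?] /andP [? ?]; split; nia.
Qed.

Lemma rat_num_den_pos (s : rat) : (0 < s)%R ->
  s = (`|numq s|%:R / `|denq s|%:R)%R /\ 0 < `|numq s| /\ 0 < `|denq s|.
Proof.
move=> s0; have n0 : (0 < numq s)%R by rewrite numq_gt0.
have d0 := denq_gt0 s.
split; last by rewrite !absz_gt0 (gt_eqF n0) (gt_eqF d0).
by rewrite -{1}[s]divq_num_den -{1}(gez0_abs (ltW n0)) -{1}(gez0_abs (ltW d0)).
Qed.

Definition balanced (s : rat) (L W : nat) : Prop :=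
  (W%:R * s < L%:R + s)%R /\ (L%:R < W%:R * s + s)%R.

Lemma CS_balanced (s : rat) (A B : seq nat) : (0 < s)%R -> (s <= 1)%R ->
  cyc_subseq (A ++ B) (CS_rat s) -> balanced s (size B) (sumn B).
Proof.
move=> s0 s1 [j]; have [Es [a0 b0]] := rat_num_den_pos s0.
rewrite /CS_rat /u_rat; set a := `|numq s| in Es a0 *; set b := `|denq s| in Es b0 *.
have ab : a <= b by move: s1; rewrite Es ler_pdivrMr ?ltr0n // mul1r ler_nat.
rewrite CS_u_word; [|exact: coprime_num_den|by rewrite a0 ab].
move=> /(level_counts_window (ltac:(lia) : 0 < a <= b)) [lo hi].
have bR : (0 < b%:R :> rat)%R by rewrite ltr0n.
have cmp u v w z :
    (u%:R * s + v%:R < w%:R * s + z%:R)%R = (u * a + v * b < w * a + z * b).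
  rewrite Es -(ltr_pM2r bR) !mulrDl -!mulrA !mulVf ?(gt_eqF bR) // !mulr1.
  by rewrite -!natrM -!natrD ltr_nat.
split.
  by have := cmp (sumn B) 0 1 (size B); rewrite addr0 mul1r addrC => ->; lia.
have := cmp 0 (size B) (sumn B).+1 0.
by rewrite mul0r add0r addr0 -addn1 natrD mulrDl mul1r => ->; lia.
Qed.

Lemma rep2_snoc c X Y : rep2 c.+1 X Y = (rep2 c X Y ++ X) ++ Y.
Proof.
rewrite /rep2 -catA; elim: c => /= [|c IH]; first by rewrite cats0.
by rewrite {1}IH catA.
Qed.

Lemma rep2_shift c X Y : rep2 c.+1 X Y = X ++ (rep2 c Y X ++ Y).
Proof.
rewrite /rep2; elim: c => /= [|c IH]; first by rewrite !cats0.
by rewrite IH !catA.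
Qed.

Lemma size_rep2 c X Y : size (rep2 c X Y) = c * (size X + size Y).
Proof. by elim: c => //= c IH; rewrite /rep2 /= size_cat -/(rep2 _ _ _) IH size_cat mulSn. Qed.

Lemma sumn_rep2 c X Y : sumn (rep2 c X Y) = c * (sumn X + sumn Y).
Proof. by elim: c => //= c IH; rewrite /rep2 /= sumn_cat -/(rep2 _ _ _) IH sumn_cat mulSn. Qed.

Lemma cyc_subseq_catl (A B cs : seq nat) : cyc_subseq (A ++ B) cs -> cyc_subseq A cs.
Proof. by case=> j /catl_prefix; exists j. Qed.

Lemma rep2_balanced (s : rat) c X Y : (0 < s)%R -> (s <= 1)%R ->
  cyc_subseq (rep2 c.+1 X Y) (CS_rat s) ->
  balanced s (c * (size X + size Y) + size X) (c * (sumn X + sumn Y) + sumn X) /\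
  balanced s (c * (size X + size Y) + size Y) (c * (sumn X + sumn Y) + sumn Y).
Proof.
move=> s0 s1 sub; split.
  rewrite rep2_snoc in sub.
  have := @CS_balanced s [::] _ s0 s1 (cyc_subseq_catl sub).
  by rewrite size_cat sumn_cat size_rep2 sumn_rep2.
rewrite rep2_shift in sub; have := CS_balanced s0 s1 sub.
by rewrite size_cat sumn_cat size_rep2 sumn_rep2 [size Y + _]addnC [sumn Y + _]addnC.
Qed.

(* convergents [:: m_1; ...; m_k] = (q, q', p, p') where q/p = [m_1,...,m_k] and
   q'/p' = [m_1,...,m_{k-1}] (numerators and denominators built by the usual
   recurrence, read from the front). *)
Fixpoint convergents (ms : seq nat) : nat * nat * nat * nat :=
  match ms with
  | [::] => (0, 1, 1, 0)
  | m :: r => let: (q, q', p, p') := convergents r in (p, p', m * p + q, m * p' + q')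
  end.

Definition cf_tail (ms : seq nat) (w : rat) : rat :=
  foldr (fun m acc => (m%:R + acc)^-1)%R w ms.

Lemma cf_cat ms t : cf (ms ++ t) = cf_tail ms (cf t).
Proof. by elim: ms => //= m ms ->. Qed.

Lemma convergents_rcons ms y q q' p p' : convergents ms = (q, q', p, p') ->
  convergents (ms ++ [:: y]) = (y * q + q', q, y * p + p', p).
Proof.
elim: ms q q' p p' => [|m ms IH] q q' p p' /=.
  by case=> <- <- <- <-; rewrite !muln0 !muln1.
case E: (convergents ms) => [[[a b] c] d] [<- <- <- <-].
by rewrite (IH _ _ _ _ E); congr (_, _, _, _); lia.
Qed.

Lemma convergents_det ms q q' p p' : convergents ms = (q, q', p, p') ->
  if odd (size ms) then q * p' = q' * p + 1 else q' * p = q * p' + 1.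
Proof.
elim: ms q q' p p' => [|m ms IH] q q' p p' /=; first by case=> <- <- <- <-.
case E: (convergents ms) => [[[a b] c] d] [<- <- <- <-].
by have := IH _ _ _ _ E; case: (odd (size ms)) => /= ?; nia.
Qed.

Lemma convergents_den_pos ms q q' p p' : all (fun m => 0 < m) ms ->
  convergents ms = (q, q', p, p') -> 0 < p.
Proof.
elim: ms q q' p p' => [|m ms IH] q q' p p' /=; first by move=> _ [_ _ <-].
case E: (convergents ms) => [[[a b] c] d] /andP [m0 /IH /(_ E) c0] [_ _ <- _]; nia.
Qed.

Lemma convergents_den_bounds ms q q' p p' : cf_valid ms ->
  convergents ms = (q, q', p, p') -> 0 < p' <= p.
Proof.
case/lastP: ms => [|ms0 mk] // /and3P [_ Hall _]; rewrite -cats1.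
move: Hall; rewrite -cats1 all_cat /= andbT => /andP [Hall0 mk0].
case E0: (convergents ms0) => [[[a b] c] d].
rewrite (convergents_rcons mk E0) => -[_ _ <- <-].
by have := convergents_den_pos Hall0 E0; nia.
Qed.

Lemma cf_tail_convergents ms w q q' p p' : all (fun m => 0 < m) ms ->
  convergents ms = (q, q', p, p') -> (0 <= w)%R ->
  cf_tail ms w = ((q%:R + q'%:R * w) / (p%:R + p'%:R * w))%R.
Proof.
move=> + + w0; elim: ms q q' p p' => [|m ms IH] q q' p p' /=.
  by move=> _ [<- <- <- <-]; rewrite add0r mul1r mul0r addr0 divr1.
case E: (convergents ms) => [[[a b] c] d] /andP [m0 Hall] [<- <- <- <-].
have c0 := convergents_den_pos Hall E.
rewrite (IH _ _ _ _ Hall E).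
have den0 : (0 < (c%:R + d%:R * w : rat))%R by rewrite ltr_pwDl ?mulr_ge0 ?ltr0n.
rewrite -[X in (X + _)%R](mulfK (lt0r_neq0 den0)) -mulrDl invf_div.
by congr (_ / _)%R; rewrite !natrD !natrM; ring.
Qed.

Lemma cf_ge0 ms : (0 <= cf ms)%R.
Proof. by elim: ms => //= m ms IH; rewrite invr_ge0 addr_ge0. Qed.

Lemma cf_le1 m ms : 0 < m -> (cf (m :: ms) <= 1)%R.
Proof.
move=> m0 /=; have ge1 : (1 <= m%:R + cf ms :> rat)%R.
  by rewrite (le_trans (_ : 1 <= m%:R)%R) ?ler1n // lerDl cf_ge0.
by rewrite invf_le1 // (lt_le_trans ltr01).
Qed.

Lemma cf_append_convergents ms c q q' p p' : all (fun m => 0 < m) ms ->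
  convergents ms = (q, q', p, p') -> 0 < c ->
  cf (ms ++ [:: c]) = ((c%:R * q%:R + q'%:R) / (c%:R * p%:R + p'%:R))%R.
Proof.
move=> Hall E c0; have p0 := convergents_den_pos Hall E.
rewrite cf_cat (cf_tail_convergents Hall E) /= ?invr_ge0 ?addr0 ?ler0n //.
have cR : (c%:R : rat) != 0%R by rewrite pnatr_eq0 -lt0n.
have den0 : (0 < (c%:R * p%:R + p'%:R : rat))%R by rewrite ltr_pwDl ?mulr_gt0 ?ltr0n.
by field; rewrite cR (lt0r_neq0 den0).
Qed.

Lemma cf_half_step_convergents ms0 mk q q' p p' : all (fun m => 0 < m) ms0 -> 0 < mk ->
  convergents (ms0 ++ [:: mk]) = (q, q', p, p') ->
  cf (ms0 ++ [:: mk.-1; 2]) = ((2 * q%:R - q'%:R) / (2 * p%:R - p'%:R))%R.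
Proof.
move=> Hall mk0; case E0: (convergents ms0) => [[[a b] c] d].
rewrite (convergents_rcons mk E0) => -[<- <- <- <-].
rewrite cf_cat (cf_tail_convergents Hall E0 (cf_ge0 _)) /=.
have c0 := convergents_den_pos Hall E0.
case: mk mk0 => // k _; rewrite !natrD !natrM /= addr0.
have cR : (0 < c%:R :> rat)%R by rewrite ltr0n.
have kc : (0 <= k%:R * c%:R :> rat)%R by rewrite mulr_ge0 ?ler0n.
have dR : (0 <= d%:R :> rat)%R by rewrite ler0n.
have kR : (0 <= k%:R :> rat)%R by rewrite ler0n.
by field; apply/andP; split; rewrite lt0r_neq0 //; lra.
Qed.

Lemma size_blocks (x y : nat) (T : seq nat) :
  size (flatten [seq x :: nseq t y | t <- T]) = size T + sumn T.
Proof. by elim: T => //= t T IH; rewrite size_cat /= size_nseq IH; lia. Qed.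

Lemma sumn_blocks (x y : nat) (T : seq nat) :
  sumn (flatten [seq x :: nseq t y | t <- T]) = x * size T + y * sumn T.
Proof. by elim: T => /= [|t T IH]; rewrite ?muln0 // sumn_cat /= sumn_nseq IH; lia. Qed.

(* The first entry of S_1 is positive,
   which keeps the recursion's head lookup meaningful. *)
Definition pair_spec (odd_len : bool) (q q' p p' : nat) (S : seq nat * seq nat) : Prop :=
  [/\ 0 < head 0 S.1, size S.1 + size S.2 = q, sumn S.1 + sumn S.2 = p &
      if odd_len then size S.2 = q' /\ sumn S.2 + 1 = p'
      else size S.1 = q' /\ sumn S.1 = p' + 1].

(* Valid expansions of length at least 2, the domain of the recursion of pairF. *)
Definition long_valid (ms : seq nat) : bool :=
  [&& 2 <= size ms, all (fun m => 0 < m) ms & 2 <= last 0 ms].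

Lemma pairF_spec fuel ms : sumn ms < fuel -> long_valid ms ->
  let: (q, q', p, p') := convergents ms in
  pair_spec (odd (size ms)) q q' p p' (pairF fuel ms).
Proof.
elim: fuel ms => [|fuel IH] ms; first by rewrite ltn0.
case: ms => [|m [|m2 rest]] //= Hs /and3P [_ /andP [m0 /andP [m20 Hall]] Hl].
case: ifP => [/eqP E2|E2].
- subst m2; case: rest Hall Hl Hs => [|m3 [|x rest]] //= Hall Hl Hs.
  + move: Hall => /= /andP [m30 _]; rewrite /pair_spec /= size_nseq sumn_nseq.
    by case: m3 m30 {Hl Hs} => // k _; split => //=; lia.
  + have Hg : long_valid [:: m3, x & rest] by rewrite /long_valid /= Hall; lia.
    have := IH [:: m3, x & rest] ltac:(rewrite /=; lia) Hg; rewrite /pair_spec /=.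
    case: (pairF fuel _) => [T1 T2] /=; case: (convergents rest) => [[[a b] c] d] /=.
    case: T1 => [|t0 T1'] [] //= t00 HT1 HT2 Hpar.
    rewrite !size_cat !sumn_cat size_nseq sumn_nseq !size_blocks !sumn_blocks /= !negbK.
    case: t0 t00 HT1 HT2 Hpar => // t _ HT1 HT2 Hpar.
    by case: (odd (size rest)) Hpar => -[? ?]; split => //; nia.
- have m2g : 2 <= m2 by lia.
  case: rest Hall Hl Hs => [|x rest] //= Hall Hl Hs.
  + rewrite /pair_spec /= size_nseq sumn_nseq.
    by case: m2 m2g {E2 m20 Hl Hs} => // k _; split => //=; lia.
  + have Hg : long_valid [:: m2.-1, x & rest] by rewrite /long_valid /= Hall; lia.
    have := IH [:: m2.-1, x & rest] ltac:(rewrite /=; lia) Hg; rewrite /pair_spec /=.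
    case: (pairF fuel _) => [T1 T2] /=; case: (convergents rest) => [[[a b] c] d] /=.
    case: T1 => [|t0 T1'] [] //= t00 HT1 HT2 Hpar.
    rewrite !size_cat !sumn_cat size_nseq sumn_nseq !size_blocks !sumn_blocks /= !negbK.
    case: m2 m2g {E2 m20 Hl Hs Hg} HT1 HT2 Hpar => // k _ HT1 HT2.
    have -> : head 0 (flatten [seq m.+1 :: nseq t m | t <- T2] ++ [:: m.+1]) = m.+1.
      by case: (T2).
    by rewrite /= !negbK; case: (odd (size rest)) => -[? ?]; split => //=; nia.
Qed.

Lemma assoc_pair_spec ms q q' p p' : cf_valid ms -> 2 <= size ms ->
  convergents ms = (q, q', p, p') -> pair_spec (odd (size ms)) q q' p p' (assoc_pair ms).
Proof.
move=> /and3P [_ Hall Hl] k2 E.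
have valid : long_valid ms by move: Hl; rewrite /long_valid k2 Hall.
by have := @pairF_spec (sumn ms).+1 ms (ltnSn _) valid; rewrite E.
Qed.

Section Mediants.

Variable R : realFieldType.
Local Open Scope ring_scope.

Lemma mediant_diff (q q' p p' x : R) :
  x * p - p' != 0 -> 2 * p - p' != 0 ->
  (x * q - q') / (x * p - p') - (2 * q - q') / (2 * p - p') =
  (x - 2) * (q' * p - q * p') / ((x * p - p') * (2 * p - p')).
Proof. by move=> dx d2; field; rewrite dx d2. Qed.

(* For Farey neighbours with q/p > q'/p', the fractions (x q - q')/(x p - p') decrease
   towards q/p as x grows; the case x >= 2 is compared with x = 2. *)
Lemma mediant_le (q q' p p' x : R) :
  q * p' = q' * p + 1 -> 0 < p' <= p -> 2 <= x ->
  (x * q - q') / (x * p - p') <= (2 * q - q') / (2 * p - p').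
Proof.
move=> det /andP [p'0 p'p] x2.
have d2 : 0 < 2 * p - p' by lra.
have dx : 0 < x * p - p' by nra.
rewrite -subr_le0 mediant_diff ?lt0r_neq0 // det.
rewrite (_ : q' * p - (q' * p + 1) = -1); last by ring.
by rewrite mulrN1 mulNr oppr_le0 divr_ge0 ?subr_ge0 // mulr_ge0 ?ltW.
Qed.

(* The mirror case q/p < q'/p', obtained by negating the numerators. *)
Lemma mediant_ge (q q' p p' x : R) :
  q' * p = q * p' + 1 -> 0 < p' <= p -> 2 <= x ->
  (2 * q - q') / (2 * p - p') <= (x * q - q') / (x * p - p').
Proof.
move=> det pp x2; rewrite -lerN2 -!mulNr !opprB.
have := @mediant_le (- q) (- q') p p' x; rewrite !mulrN !opprK ![- (_ * q) + _]addrC.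
by apply => //; rewrite !mulNr det opprD subrK.
Qed.

(* s lies in I_1 ∪ I_2, written with the endpoints r_a and r_b (k odd or even). *)
Definition outside_gap (odd_len : bool) (ra rb s : R) : Prop :=
  if odd_len then s < ra \/ rb <= s else s <= rb \/ ra < s.

Lemma outside_gap_contra (odd_len : bool) (q q' p p' x ra s : R) :
  (if odd_len then q * p' = q' * p + 1 else q' * p = q * p' + 1) ->
  0 < p' <= p -> 2 <= x ->
  (if odd_len then ra < s < (x * q - q') / (x * p - p')
   else (x * q - q') / (x * p - p') < s < ra) ->
  ~ outside_gap odd_len ra ((2 * q - q') / (2 * p - p')) s.
Proof.
case: odd_len => det pp x2 /andP [lo hi] [] out /=.
- by move: (lt_trans lo out); rewrite ltxx.
- by move: (lt_le_trans hi (mediant_le det pp x2)); rewrite ltNge out.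
- by move: (le_lt_trans (mediant_ge det pp x2) lo); rewrite ltNge out.
- by move: (lt_trans out hi); rewrite ltxx.
Qed.

End Mediants.

Lemma in_I12_bounds ms n s : cf_valid ms -> s != 0%R -> in_I12 ms n s ->
  (0 < s)%R /\ (s <= 1)%R.
Proof.
case: ms => [|m ms] // /and3P [_ /andP [m0 _] _] s0.
have ra_le1 : (ra (m :: ms) n <= 1)%R by rewrite /ra cf_le1.
have rb_le1 : ~~ odd (size (m :: ms)) -> (rb (m :: ms) <= 1)%R.
  by case: ms {ra_le1} => // x ms _; rewrite /rb /= cf_le1.
rewrite /in_I12 lt0r s0 /=; case: ifP => Hodd /orP [] /andP [lo hi]; split => //.
- exact: le_trans (ltW hi) ra_le1.
- exact: le_trans (cf_ge0 _) lo.
- by apply: le_trans hi (rb_le1 _); rewrite /= Hodd.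
- exact: le_trans (cf_ge0 _) (ltW lo).
Qed.

Lemma in_I12_gap ms n s q q' p p' : cf_valid ms -> 2 <= n ->
  convergents ms = (q, q', p, p') -> in_I12 ms n s ->
  outside_gap (odd (size ms))
    (((2 * n - 2)%:R * q%:R + q'%:R) / ((2 * n - 2)%:R * p%:R + p'%:R))%R
    ((2 * q%:R - q'%:R) / (2 * p%:R - p'%:R))%R s.
Proof.
case/lastP: ms => [|ms0 mk] // /and3P [_ Hall _] n2; rewrite -cats1 in Hall * => E.
move: (Hall); rewrite all_cat /= andbT => /andP [Hall0 mk0].
rewrite /in_I12 /ra /rb (cf_append_convergents Hall E); last by lia.
rewrite size_cat addn1 /= take_size_cat // last_cat /=.
rewrite (cf_half_step_convergents Hall0 mk0 E).
by rewrite /outside_gap; case: ifP => _ /orP [] /andP [lo hi]; [left|right|left|right].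
Qed.

Lemma no_block_power ms n s : cf_valid ms -> size ms = 1 -> 2 <= n -> s != 0%R ->
  in_I12 ms n s -> ~ cyc_subseq (nseq (2 * n - 2) (head 0 ms)) (CS_rat s).
Proof.
case: ms => [|m []] // valid _ n2 s0 HI sub.
have m0 : 0 < m by case/and3P: valid => _ /andP [].
have [spos s1] := in_I12_bounds valid s0 HI.
have E : convergents [:: m] = (1, 0, m, 1) by rewrite /= muln1 muln0 addn0.
have gap := in_I12_gap valid n2 E HI.
have [lo hi] := @CS_balanced s [::] _ spos s1 sub.
rewrite size_nseq sumn_nseq /= natrM in lo hi.
move: gap lo hi; set c := 2 * n - 2 => gap lo hi.
have c2 : 2 <= c by lia.
apply: (outside_gap_contra (x := c%:R) _ _ _ _ gap) => /=.
- by rewrite mul0r add0r mulr1.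
- by rewrite ler1n.
- by rewrite ler_nat.
rewrite mulr1 addr0.
have cm1 : (1 < c%:R * m%:R :> rat)%R by rewrite -natrM ltr1n; nia.
by apply/andP; split; [rewrite ltr_pdivrMr | rewrite ltr_pdivlMr]; lra.
Qed.

Lemma pair_window (odd_len : bool) (q q' p p' c : nat) (S : seq nat * seq nat) (s : rat) :
  pair_spec odd_len q q' p p' S -> 0 < p' <= p -> 0 < c ->
  balanced s (c * q + size S.1) (c * p + sumn S.1) ->
  balanced s (c * q + size S.2) (c * p + sumn S.2) ->
  if odd_len then
    ((c%:R * q%:R + q'%:R) / (c%:R * p%:R + p'%:R) < s <
     (c.+1%:R * q%:R - q'%:R) / (c.+1%:R * p%:R - p'%:R))%R
  else
    ((c.+1%:R * q%:R - q'%:R) / (c.+1%:R * p%:R - p'%:R) < s <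
     (c%:R * q%:R + q'%:R) / (c%:R * p%:R + p'%:R))%R.
Proof.
case: S => S1 S2 [_ Hq Hp Hpar] pp c0 [lo1 hi1] [lo2 hi2] /=.
have ra_den : (0 < c%:R * p%:R + p'%:R :> rat)%R.
  by rewrite -natrM -natrD ltr0n; lia.
have F_den : (0 < c.+1%:R * p%:R - p'%:R :> rat)%R.
  by rewrite -natrM subr_gt0 ltr_nat; nia.
rewrite -Hq -Hp !natrD !natrM !natrD in lo1 hi1 lo2 hi2.
case: odd_len Hpar => -[Hq' Hp']; apply/andP; split.
- by rewrite ltr_pdivrMr // -Hq -Hp -Hq' -Hp' !natrD; lra.
- by rewrite ltr_pdivlMr // -Hq -Hp -Hq' -Hp' !natrD; lra.
- rewrite ltr_pdivrMr // -Hq -Hp -Hq' !natrD.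
  by rewrite Hp' natrD in lo1 hi1 lo2 hi2 *; lra.
- rewrite ltr_pdivlMr // -Hq -Hp -Hq' !natrD.
  by rewrite Hp' natrD in lo1 hi1 lo2 hi2 *; lra.
Qed.

Lemma no_rep2 ms n s (X Y : seq nat) : cf_valid ms -> 2 <= size ms -> 2 <= n ->
  s != 0%R -> in_I12 ms n s ->
  assoc_pair ms = (X, Y) \/ assoc_pair ms = (Y, X) ->
  ~ cyc_subseq (rep2 (2 * n - 1) X Y) (CS_rat s).
Proof.
move=> valid k2 n2 s0 HI XY.
case E: (convergents ms) => [[[q q'] p] p'].
have [spos s1] := in_I12_bounds valid s0 HI.
have gap := in_I12_gap valid n2 E HI.
have pp := convergents_den_bounds valid E.
have spec := assoc_pair_spec valid k2 E.
move: gap; set c := 2 * n - 2 => gap.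
rewrite (_ : 2 * n - 1 = c.+1); last by lia.
move=> /(rep2_balanced spos s1) [bX bY].
have [b1 b2] :
    balanced s (c * q + size (assoc_pair ms).1) (c * p + sumn (assoc_pair ms).1) /\
    balanced s (c * q + size (assoc_pair ms).2) (c * p + sumn (assoc_pair ms).2).
  case: (spec) => _ Hq Hp _.
  case: XY Hq Hp => -> /= <- <-; first by split.
  by rewrite [size Y + _]addnC [sumn Y + _]addnC; split.
have window := pair_window spec pp (ltac:(lia) : 0 < c) b1 b2.
have detR : if odd (size ms) then (q%:R * p'%:R = q'%:R * p%:R + 1 :> rat)%R
            else (q'%:R * p%:R = q%:R * p'%:R + 1 :> rat)%R.
  by have := convergents_det E; case: ifP => _ H; rewrite -!natrM natr1 H addn1.
apply: (outside_gap_contra detR _ _ window gap).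
- by rewrite ltr0n ler_nat; case/andP: pp => -> ->.
- by rewrite ler_nat; lia.
Qed.

Theorem mainTheorem4 (ms : seq nat) (n : nat) (s : rat) :
  cf_valid ms ->
  (0 < cf ms)%R -> (cf ms < 1)%R ->
  (2 <= n)%N ->
  s != 0%R ->
  in_I12 ms n s ->
  (size ms = 1%N -> ~ cyc_subseq (nseq (2 * n - 2) (head 0%N ms)) (CS_rat s)) /\
  ((2 <= size ms)%N ->
     ~ cyc_subseq (rep2 (2 * n - 1) (assoc_pair ms).1 (assoc_pair ms).2) (CS_rat s) /\
     ~ cyc_subseq (rep2 (2 * n - 1) (assoc_pair ms).2 (assoc_pair ms).1) (CS_rat s)).
Proof.
move=> valid _ _ n2 s0 HI; split=> [k1 | k2]; first exact: no_block_power.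
by split; apply: (@no_rep2 ms n s) => //; case: (assoc_pair ms); [left | right].
Qed.
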